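(* Let $H$ be a graph with $1\le\delta(H)\le|V(H)|-2$ and let $\{\mathcal H_i\}_{i=1}^s$ be a $d$-sequence of $H$ with $Z=\min\{z_i(H): 2\le i\le s\}\le 0$. Let $T$ be a forest without isolated vertices of order at least $3$, let $P_T$ be the set of pendant vertices of $T$ adjacent to a vertex of degree at least $2$, and let $G=H+T$. If $|P_T|-|N_T(P_T)|\ge d_H-Z$, then $str(G)=|V(G)|+1$.
   Context: For a graph $G$ of order $p$, a numbering is a bijection $f:V(G)\to[1,p]$; $str_f(G)=\max\{f(u)+f(v): uv\in E(G)\}$ and $str(G)=\min_f str_f(G)$. $G+H$ is disjoint union; $N_T(S)$ is the set of all neighbours in $T$ of vertices of $S$; a pendant vertex has degree 1; $mK_1$ is the edgeless graph on $m$ vertices; $K_r$ the complete graph. $d$-sequence: Let $G$ have order $p$ with $1\le\delta(G)\le p-2$. Set $\mathcal G_1=G_1=G$, $m_1=0$. For each $i$, write $\mathcal G_i=m_iK_1+G_i$, where $m_i\ge0$ is the number of isolated vertices of $\mathcal G_i$ and $G_i$ has no isolated vertices. If $\mathcal G_i$ is neither of the form $mK_1$ ($m\ge1$) nor $mK_1+K_r$ ($m\ge0$, $r\ge2$), choose any vertex $u_i$ of $G_i$, put $d_i=\deg_{G_i}(u_i)$, and let $\mathcal G_{i+1}$ be obtained from $G_i$ by deleting $u_i$ together with all its neighbours in $G_i$. Stop at the first index $s$ ($s\ge 2$) for which $\mathcal G_s$ is $m_sK_1$ with $m_s\ge1$ (then set $d_s=0$) or $m_sK_1+K_r$ with $m_s\ge0$,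 $r\ge2$ (then $d_s=r-1$). The sequence $\{\mathcal G_i\}_{i=1}^s$ is a $d$-sequence of $G$. Write $d_G=d_1$, $y_j(G)=m_j+1-d_j$ and $z_i(G)=\sum_{j=2}^i y_j(G)$ for $2\le i\le s$. *)

(* Simple graphs are given as a vertex finType V with an
   adjacency relation e : rel V (symmetry / irreflexivity are hypotheses). *)
From mathcomp Require Import all_boot all_order all_algebra.
Set Implicit Arguments. Unset Strict Implicit. Unset Printing Implicit Defensive.
Import Order.TTheory GRing.Theory Num.Theory.

Section Graphs.
Variables (V : finType) (e : rel V).

Definition deg (x : V) : nat := #|[set y | e x y]|.

(* A numbering is a bijection V -> [1, p]; we encode it as an injective
   (hence bijective) f : V -> 'I_p, the number of v being (f v).+1. *)
Definition strf (f : V -> 'I_#|V|) : nat :=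
  \max_(u : V) \max_(v : V | e u v) ((f u).+1 + (f v).+1).

Lemma str_ex : exists n,
  [exists f : {ffun V -> 'I_#|V|}, injectiveb f && (strf f == n)].
Proof.
exists (strf (finfun enum_rank)); apply/existsP; exists (finfun enum_rank).
rewrite eqxx andbT; apply/injectiveP => x y; rewrite !ffunE; exact: enum_rank_inj.
Qed.

Definition str : nat := ex_minn str_ex.

Definition iso (W : {set V}) : {set V} :=
  [set x in W | [forall y in W, ~~ e x y]].
Definition core (W : {set V}) : {set V} := W :\: iso W.
Definition mnum (W : {set V}) : nat := #|iso W|.
Definition degIn (W : {set V}) (x : V) : nat := #|[set y in W | e x y]|.

Definition edgeless (W : {set V}) : bool :=
  [forall x in W, forall y in W, ~~ e x y].
Definition completeOn (W : {set V}) : bool :=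
  [forall x in W, forall y in W, (x != y) ==> e x y].

Definition stop_empty (W : {set V}) : bool := (W != set0) && edgeless W.
(* H[W] is m K_1 + K_r with r >= 2 (the non-isolated part is complete;
   being nonempty it has an edge, hence r >= 2) *)
Definition stop_complete (W : {set V}) : bool :=
  (core W != set0) && completeOn (core W).
Definition stopform (W : {set V}) : bool := stop_empty W || stop_complete W.

Definition dstop (W : {set V}) : nat :=
  if stop_complete W then #|core W|.-1 else 0.

(* A d-sequence: vertex sets W 1, ..., W s (G_i = H[W i]) and chosen
   vertices u 1, ..., u (s-1). *)
Definition is_dseq (s : nat) (W : nat -> {set V}) (u : nat -> V) : Prop :=
  [/\ 2 <= s, W 1 = [set: V],
      (forall i, 1 <= i < s ->
         [/\ ~~ stopform (W i), u i \in core (W i) &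
             W i.+1 = [set y in core (W i) | (y != u i) && ~~ e (u i) y]])
    & stopform (W s)].

Definition dval (s : nat) (W : nat -> {set V}) (u : nat -> V) (i : nat) : nat :=
  if i < s then degIn (W i) (u i) else dstop (W s).

Definition yval s W u (j : nat) : int :=
  ((mnum (W j)).+1)%:Z - (dval s W u j)%:Z.

Definition zval s W u (i : nat) : int := \sum_(2 <= j < i.+1) yval s W u j.

Definition Zmin s W u : int :=
  \big[Order.min/zval s W u 2]_(2 <= i < s.+1) zval s W u i.

Definition acyclic : Prop :=
  ~ exists c : seq V, [&& uniq c, 2 < size c & cycle e c].

Definition PT : {set V} :=
  [set x | (deg x == 1) && [exists y, e x y && (2 <= deg y)]].

Definition Nbh (S : {set V}) : {set V} := [set y | [exists x in S, e x y]].

End Graphs.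

Definition sum_rel (V1 V2 : finType) (e1 : rel V1) (e2 : rel V2)
  : rel (V1 + V2)%type :=
  fun a b => match a, b with
             | inl x, inl y => e1 x y
             | inr x, inr y => e2 x y
             | _, _ => false
             end.

(* Lower bound: in a graph without isolated vertices, the vertex numbered p has
   a neighbour, so str(G) >= p + 1 (strf_lower).

   Upper bound: a numbering with strength p + 1 is read off from a layering of
   V(G) into low vertices L and high vertices S, stamped with times, such that
   every neighbour of a high vertex is a low vertex stamped strictly earlier and,
   at each time, the low vertices so far outnumber the high ones by at most one.
   If |L| <= |S|, numbering L by 1, 2, ... and S by p, p - 1, ... in time order
   gives strength <= p + 1 (str_admissible).  Layerings are grown block by block
   (admissible_extend): at most b + 1 new low vertices, b = |S| - |L| being the
   current surplus, followed by high vertices whose neighbours are all placed.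

   For G = H + T the blocks are: each support vertex of N_T(P_T) with its
   pendant neighbours (surplus |P_T| - |N_T(P_T)|), then the rest of the forest
   leaf by leaf, then H along its d-sequence, where step i puts the d_i
   neighbours of u_i low and u_i with the m_{i+1} newly isolated vertices high.
   The hypothesis |P_T| - |N_T(P_T)| >= d_H - Z keeps the surplus >= d_i at
   every step, including the final complete graph. *)

From mathcomp Require Import all_boot all_order all_algebra zify.
Import Order.TTheory GRing.Theory Num.Theory.
Set Implicit Arguments. Unset Strict Implicit. Unset Printing Implicit Defensive.

Lemma cardsU_disjoint (T : finType) (A B : {set T}) :
  [disjoint A & B] -> #|A :|: B| = #|A| + #|B|.
Proof. by move=> dAB; apply/eqP; rewrite (leq_card_setU A B).2. Qed.

Section Layering.
Variables (V : finType) (e : rel V).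
Hypothesis e_sym : symmetric e.

Definition layering (L S : {set V}) (k : V -> nat) : Prop :=
  [/\ [disjoint L & S],
      forall x y, x \in S -> e x y -> (y \in L) && (k y < k x) &
      forall l, l \in L ->
        #|[set l' in L | k l' <= k l]| <= #|[set x in S | k x <= k l]|.+1].

Definition admissible (D : {set V}) (b : nat) : Prop :=
  exists L S k, [/\ layering L S k, L :|: S = D & #|L| + b <= #|S|].

Lemma admissible0 : admissible set0 0.
Proof.
exists set0, set0, (fun=> 0); rewrite /layering setU0 cards0.
by split=> //; split=> [|x y|l]; rewrite ?inE // -setI_eq0 setI0.
Qed.

Section Extension.
Variables (L S Lb Sb : {set V}) (k : V -> nat) (b : nat).
Hypotheses (layLS : layering L S k) (surplus : #|L| + b <= #|S|).
Hypotheses (dis_LbSb : [disjoint Lb & Sb]).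
Hypotheses (dis_Lb : [disjoint Lb & L :|: S]) (dis_Sb : [disjoint Sb & L :|: S]).
Hypothesis small_Lb : #|Lb| <= b.+1.
Hypothesis Sb_nbr : forall x y, x \in Sb -> e x y -> (y \in Lb) || (y \in L :|: S).

Let t0 := (\max_(v : V) k v).+1.
Let k' v := if v \in Lb then t0 else if v \in Sb then t0.+1 else k v.

Let k_lt v : k v < t0. Proof. by rewrite ltnS leq_bigmax. Qed.

Let old_k' v : v \in L :|: S -> k' v = k v.
Proof. by move=> vD; rewrite /k' (disjointFl dis_Lb vD) (disjointFl dis_Sb vD). Qed.

Let dis_L_Lb : [disjoint L & Lb].
Proof. by rewrite disjoint_sym (disjointWr (subsetUl L S) dis_Lb). Qed.
Let dis_S_Sb : [disjoint S & Sb].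
Proof. by rewrite disjoint_sym (disjointWr (subsetUr L S) dis_Sb). Qed.

Let L_D v : v \in L -> v \in L :|: S. Proof. by rewrite inE => ->. Qed.
Let S_D v : v \in S -> v \in L :|: S. Proof. by rewrite inE orbC => ->. Qed.

Let k'_Lb v : v \in Lb -> k' v = t0. Proof. by rewrite /k' => ->. Qed.
Let k'_Sb v : v \in Sb -> k' v = t0.+1.
Proof. by move=> vSb; rewrite /k' (disjointFl dis_LbSb vSb) vSb. Qed.

Let dis_new : [disjoint L :|: Lb & S :|: Sb].
Proof.
have [dLS _ _] := layLS.
rewrite disjoints_subset; apply/subsetP => v; rewrite !inE negb_or.
case/orP => [vL|vLb].
  by rewrite (disjointFr dLS vL) (disjointFl dis_Sb (L_D vL)).
rewrite (disjointFr dis_LbSb vLb) andbT; apply/negP => vS.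
by have := disjointFr dis_Lb vLb; rewrite inE vS orbT.
Qed.

Let edges_new x y : x \in S :|: Sb -> e x y -> (y \in L :|: Lb) && (k' y < k' x).
Proof.
have [dLS HS _] := layLS.
rewrite inE => /orP [xS|xSb] exy.
  have /andP [yL kyx] := HS x y xS exy.
  by rewrite inE yL /= (old_k' (L_D yL)) (old_k' (S_D xS)).
rewrite (k'_Sb xSb); case/orP: (Sb_nbr xSb exy) => [yLb|yD].
  by rewrite inE yLb orbT (k'_Lb yLb) ltnSn.
move: (yD); rewrite inE => /orP [yL|yS].
  by rewrite inE yL (old_k' yD) ltnS ltnW.
have /andP [xL _] := HS y x yS (etrans (e_sym y x) exy).
by move: (disjointFl dis_Sb (L_D xL)); rewrite xSb.
Qed.

Let count_new l : l \in L :|: Lb ->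
  #|[set l' in L :|: Lb | k' l' <= k' l]| <= #|[set x in S :|: Sb | k' x <= k' l]|.+1.
Proof.
have [_ _ HL] := layLS.
rewrite inE => /orP [lL|lLb].
  rewrite (old_k' (L_D lL)).
  have k'_big v : v \in Lb :|: Sb -> k l < k' v.
    by rewrite inE => /orP [/k'_Lb ->|/k'_Sb ->]; [exact: k_lt | exact: ltnW (k_lt l)].
  have drop_new (A B : {set V}) : B \subset Lb :|: Sb -> {subset A <= L :|: S} ->
      [set v in A :|: B | k' v <= k l] = [set v in A | k v <= k l].
    move=> sB sA; apply/setP => v; rewrite !inE.
    case vA: (v \in A); first by rewrite old_k' ?sA.
    case vB: (v \in B) => //=; rewrite leqNgt k'_big //; exact: (subsetP sB).
  by rewrite !drop_new ?HL ?subsetUl ?subsetUr.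
rewrite (k'_Lb lLb).
apply: (@leq_trans #|L :|: Lb|).
  by apply: subset_leq_card; apply/subsetP => v; rewrite inE => /andP [].
apply: (@leq_trans #|S|.+1); first by rewrite cardsU_disjoint //; lia.
rewrite ltnS subset_leq_card //; apply/subsetP => v vS.
by rewrite !inE vS /= old_k' ?S_D // ltnW.
Qed.

Let extend_layering : layering (L :|: Lb) (S :|: Sb) k'.
Proof. by split; [exact: dis_new | exact: edges_new | exact: count_new]. Qed.

Lemma admissible_extension b' : b' + #|Lb| <= b + #|Sb| ->
  admissible (L :|: S :|: Lb :|: Sb) b'.
Proof.
move=> surplus'; exists (L :|: Lb), (S :|: Sb), k'; split=> //.
- by apply/setP => v; rewrite !inE; case: (v \in L); case: (v \in S); case: (v \in Lb).
by rewrite !cardsU_disjoint //; lia.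
Qed.

End Extension.

Lemma admissible_extend (D Lb Sb : {set V}) b b' : admissible D b ->
  [disjoint Lb & Sb] -> [disjoint Lb & D] -> [disjoint Sb & D] ->
  #|Lb| <= b.+1 -> b' + #|Lb| <= b + #|Sb| ->
  (forall x y, x \in Sb -> e x y -> (y \in Lb) || (y \in D)) ->
  admissible (D :|: Lb :|: Sb) b'.
Proof.
case=> L [S [k [layLS <- surplus]]] dLbSb dLb dSb smallLb surplus' Sb_nbr.
exact: (admissible_extension layLS surplus dLbSb dLb dSb smallLb Sb_nbr surplus').
Qed.
End Layering.

Section Ranks.
Variables (V : finType) (c : V -> nat).
Hypothesis c_inj : injective c.

Definition rank (A : {set V}) (v : V) : nat := #|[set y in A | c y < c v]|.

Lemma rank_lt (A : {set V}) u v : u \in A -> c u < c v -> rank A u < rank A v.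
Proof.
move=> uA cuv; rewrite /rank (cardsD1 u [set y in A | c y < c v]) !inE uA cuv add1n ltnS.
apply: subset_leq_card; apply/subsetP => y; rewrite !inE => /andP [yA cyu].
by rewrite yA (ltn_trans cyu cuv) !andbT; apply/eqP => yu; move: cyu; rewrite yu ltnn.
Qed.

Lemma rank_bound (A : {set V}) v : v \in A -> rank A v < #|A|.
Proof.
move=> vA; rewrite /rank (cardsD1 v A) vA add1n ltnS subset_leq_card //.
apply/subsetP => y; rewrite !inE => /andP [yA cyv]; rewrite yA andbT.
by apply/eqP => yv; move: cyv; rewrite yv ltnn.
Qed.

Lemma rank_inj (A : {set V}) u v : u \in A -> v \in A -> rank A u = rank A v -> u = v.
Proof.
move=> uA vA ruv; case: (ltngtP (c u) (c v)) => [cuv|cvu|/c_inj //].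
  by move: (rank_lt uA cuv); rewrite ruv ltnn.
by move: (rank_lt vA cvu); rewrite ruv ltnn.
Qed.
End Ranks.

Section Numbering.
Variables (V : finType) (e : rel V).
Hypothesis e_sym : symmetric e.
Variables (L S : {set V}) (k : V -> nat).
Hypotheses (layLS : layering e L S k) (cover : L :|: S = setT) (LS_le : #|L| <= #|S|).

Let n := #|V|.
(* order by time stamp, ties broken by enum_rank *)
Let code (v : V) : nat := k v * n + enum_rank v.

Let code_inj : injective code.
Proof.
move=> u v /(congr1 (modn^~ n)); rewrite /code !modnMDl !modn_small ?ltn_ord //.
by move/val_inj/enum_rank_inj.
Qed.

Let code_mono u v : k u < k v -> code u < code v.
Proof.
move=> kuv; rewrite /code; apply: (@leq_trans ((k u).+1 * n)).
  by rewrite mulSn addnC ltn_add2r ltn_ord.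
by apply: leq_trans (leq_addr _ _); rewrite leq_mul2r kuv orbT.
Qed.

Let n_LS : n = #|L| + #|S|.
Proof. by have [dLS _ _] := layLS; rewrite /n -cardsT -cover cardsU_disjoint. Qed.

Let notS_L v : v \notin S -> v \in L.
Proof. by move=> vS; have := in_setT v; rewrite -cover inE (negbTE vS) orbF. Qed.

(* low vertices are numbered 1, 2, ... and high ones n, n - 1, ..., both in
   code order (the values below are the numbers minus one) *)
Definition layer_num (v : V) : nat :=
  if v \in S then n.-1 - rank code S v else rank code L v.

Lemma layer_num_lt v : layer_num v < n.
Proof.
rewrite /layer_num n_LS; case: ifP => [vS|/negbT/notS_L vL].
  by have := rank_bound code vS; lia.
by have := rank_bound code vL; lia.
Qed.

Lemma layer_num_inj : injective layer_num.
Proof.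
move=> u v; rewrite /layer_num.
case: ifP => [uS|/negbT/notS_L uL]; case: ifP => [vS|/negbT/notS_L vL].
- have := rank_bound code uS; have := rank_bound code vS; rewrite n_LS => hu hv huv.
  by apply: (rank_inj code_inj uS vS); lia.
- by have := rank_bound code uS; have := rank_bound code vL; rewrite n_LS; lia.
- by have := rank_bound code vS; have := rank_bound code uL; rewrite n_LS; lia.
exact: (rank_inj code_inj uL vL).
Qed.

Lemma rank_low_high l h : l \in L -> h \in S -> k l < k h ->
  rank code L l <= rank code S h.
Proof.
move=> lL hS klh; have [_ _ HL] := layLS.
have lowL : (rank code L l).+1 <= #|[set l' in L | k l' <= k l]|.
  rewrite (cardsD1 l) !inE lL leqnn add1n ltnS subset_leq_card //.
  apply/subsetP => y; rewrite !inE => /andP [yL cyl]; rewrite yL /=.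
  apply/andP; split; first by apply/eqP => yl; move: cyl; rewrite yl ltnn.
  by rewrite leqNgt; apply/negP => /code_mono /ltn_trans /(_ cyl); rewrite ltnn.
have highS : #|[set x in S | k x <= k l]| <= rank code S h.
  apply: subset_leq_card; apply/subsetP => y; rewrite !inE => /andP [-> kyl].
  exact: code_mono (leq_ltn_trans kyl klh).
by have := HL l lL; lia.
Qed.

(* low-low edges stay below |L| + |L| <= n, high-low edges are controlled by
   rank_low_high, and there are no high-high edges *)
Lemma layer_num_edge u v : e u v -> (layer_num u).+1 + (layer_num v).+1 <= n.+1.
Proof.
have [_ HS _] := layLS.
wlog uS : u v / (u \in S) || (v \notin S).
  move=> hw euv; have [uS|uS] := boolP (u \in S); first by apply: hw; rewrite ?uS.
  have [vS|vS] := boolP (v \in S); last by apply: hw; rewrite ?vS ?orbT.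
  by rewrite addnC; apply: hw; rewrite ?vS // e_sym.
move=> euv; rewrite /layer_num.
case: ifP uS => [uS _|uS /= vS].
  have /andP [vL kvu] := HS u v uS euv.
  have [dLS _ _] := layLS; rewrite (disjointFr dLS vL).
  have := rank_low_high vL uS kvu; have := rank_bound code uS; rewrite n_LS; lia.
rewrite (negbTE vS).
have := rank_bound code (notS_L (negbT uS)); have := rank_bound code (notS_L vS).
rewrite n_LS; lia.
Qed.

End Numbering.

Section Strength.
Variables (V : finType) (e : rel V).
Hypothesis e_sym : symmetric e.
Hypotheses (V_gt0 : 0 < #|V|) (no_isolated : forall v, exists w, e v w).

(* some vertex gets the largest number |V|, and it has a neighbour *)
Lemma strf_lower (f : V -> 'I_#|V|) : injective f -> #|V|.+1 <= strf e f.
Proof.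
move=> f_inj; have top_lt : #|V|.-1 < #|V| by rewrite prednK.
have : Ordinal top_lt \in codom f by apply: inj_card_onto; rewrite ?card_ord.
case/codomP => v fv; have [w evw] := no_isolated v.
apply: leq_trans (leq_bigmax v); apply: leq_trans (leq_bigmax_cond w evw).
by rewrite -fv /= prednK // addnS ltnS leq_addr.
Qed.

Lemma admissible_numbering b : admissible e setT b ->
  exists2 f : {ffun V -> 'I_#|V|}, injective f & strf e f <= #|V|.+1.
Proof.
case=> L [S [k [layLS cover surplus]]].
have LS_le : #|L| <= #|S| by apply: leq_trans surplus; apply: leq_addr.
pose f := [ffun v => Ordinal (layer_num_lt layLS cover LS_le v)].
exists f.
  by move=> u v /(congr1 val); rewrite !ffunE => /(layer_num_inj layLS cover LS_le).
apply/bigmax_leqP => u _; apply/bigmax_leqP => v euv; rewrite !ffunE.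
exact: layer_num_edge.
Qed.

Lemma str_admissible b : admissible e setT b -> str e = #|V|.+1.
Proof.
case/admissible_numbering => f f_inj f_le; rewrite /str.
case: ex_minnP => m /existsP [g /andP [/injectiveP g_inj /eqP <-]] m_min.
apply/eqP; rewrite eqn_leq strf_lower // andbT; apply: leq_trans f_le.
by apply: m_min; apply/existsP; exists f; rewrite eqxx andbT; apply/injectiveP.
Qed.

End Strength.

Section Forest.
Variables (T : finType) (e : rel T).
Hypotheses (e_sym : symmetric e) (e_irr : irreflexive e) (e_acyclic : acyclic e).

Definition branching (X : {set T}) : Prop :=
  forall v, v \in X -> exists y z, [/\ y \in X, z \in X, e v y, e v z & y != z].

(* in a forest, a simple path (listed from its endpoint x) inside a branching
   set can be prolonged at x: a return onto the path would close a cycle *)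
Lemma branching_path_extend (X : {set T}) x c : branching X -> x \in X ->
  uniq (x :: c) -> path e x c -> exists2 w, w \in X & e x w && (w \notin x :: c).
Proof.
move=> branch xX hu hp; have [y [z [yX zX exy exz yz]]] := branch x xX.
have [w wX /andP [exw wh]] : exists2 w, w \in X & e x w && (w != head x c).
  case: (eqVneq y (head x c)) => [yh|yh]; last by exists y; rewrite // exy yh.
  by exists z; rewrite // exz -yh eq_sym.
exists w => //; rewrite exw /= in_cons negb_or; apply/andP; split.
  by apply/negP => /eqP wx; move: exw; rewrite wx e_irr.
apply/negP; case: c hu hp wh => [//|h c'] hu hp wh.
rewrite in_cons (negbTE wh) /= => wc; case/splitPr: wc hu hp => c1 c2 hu hp.
have cE : h :: c1 ++ w :: c2 = rcons (h :: c1) w ++ c2 by rewrite cat_rcons.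
apply: e_acyclic; exists (x :: rcons (h :: c1) w); apply/and3P; split.
- by move: hu; rewrite cE -cat_cons cat_uniq => /andP [].
- by rewrite /= size_rcons.
rewrite /cycle rcons_path last_rcons e_sym exw andbT.
by move: hp; rewrite cE cat_path => /andP [].
Qed.

Lemma forest_leaf (X : {set T}) : X != set0 ->
  exists2 v, v \in X & forall y z, y \in X -> z \in X -> e v y -> e v z -> y = z.
Proof.
move=> /set0Pn [x0 x0X].
case: (boolP [exists v in X, [forall y in X, forall z in X, e v y ==> e v z ==> (y == z)]]).
  case/exists_inP => v vX /forall_inP leaf; exists v => // y z yX zX evy evz.
  by move: (leaf y yX) => /forall_inP /(_ z zX); rewrite evy evz => /eqP.
rewrite negb_exists_in => /forall_inP no_leaf.
have branch : branching X.
  move=> v vX; move: (no_leaf v vX); rewrite negb_forall_in => /exists_inP [y yX].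
  rewrite negb_forall_in => /exists_inP [z zX].
  by rewrite !negb_imply => /and3P [evy evz yz]; exists y, z.
(* otherwise X is branching and carries simple paths of every length *)
have long n : exists x c,
    [/\ x \in X, all [in X] c, uniq (x :: c), path e x c & size c = n].
  elim: n => [|n [x [c [xX cX hu hp hs]]]]; first by exists x0, [::].
  have [w wX /andP [exw wn]] := branching_path_extend branch xX hu hp.
  exists w, (x :: c); split=> //; first by rewrite /= xX cX.
  - by rewrite cons_uniq wn hu.
  - by rewrite /= e_sym exw hp.
  by rewrite /= hs.
have [x [c [_ _ hu _ hs]]] := long #|T|.
by have := max_card (mem (x :: c)); rewrite (card_uniqP hu) /= hs ltnn.
Qed.
End Forest.

Definition sumset (VH VT : finType) (A : {set VH}) (B : {set VT}) : {set VH + VT} :=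
  [set v | match v with inl x => x \in A | inr y => y \in B end].

Section SumGraph.
Variables (VH VT : finType) (eH : rel VH) (eT : rel VT).
Hypotheses (symH : symmetric eH) (symT : symmetric eT).
Local Notation G := (sum_rel eH eT).
Implicit Types (A LA SA : {set VH}) (B LB SB : {set VT}).

Lemma sumsetU A B A' B' : sumset A B :|: sumset A' B' = sumset (A :|: A') (B :|: B').
Proof. by apply/setP => -[x|y]; rewrite !inE. Qed.

Lemma sumsetTT : sumset [set: VH] [set: VT] = setT.
Proof. by apply/setP => -[x|y]; rewrite !inE. Qed.

Lemma disjoint_sumset A B A' B' :
  [disjoint A & A'] -> [disjoint B & B'] -> [disjoint sumset A B & sumset A' B'].
Proof.
move=> dA dB; rewrite disjoints_subset; apply/subsetP => -[x|y]; rewrite !inE.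
  by move=> /(disjointFr dA) ->.
by move=> /(disjointFr dB) ->.
Qed.

Lemma card_sumset A B : #|sumset A B| = #|A| + #|B|.
Proof.
have inl_inr (x : VH) (C : {set VT}) : inl x \in inr @: C = false.
  by apply/negbTE/negP => /imsetP [].
have inr_inl (y : VT) (C : {set VH}) : inr y \in inl @: C = false.
  by apply/negbTE/negP => /imsetP [].
have -> : sumset A B = inl @: A :|: inr @: B.
  apply/setP => -[x|y]; rewrite !inE ?inl_inr ?inr_inl ?orbF //.
    by rewrite mem_imset //; exact: inl_inj.
  by rewrite mem_imset //; exact: inr_inj.
rewrite cardsU_disjoint ?card_imset //; try exact: inl_inj; try exact: inr_inj.
by rewrite disjoints_subset; apply/subsetP => _ /imsetP [x _ ->]; rewrite !inE inl_inr.
Qed.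

Lemma sum_rel_sym : symmetric G.
Proof. by move=> [x|x] [y|y]; [exact: symH | | | exact: symT]. Qed.

Lemma admissible_extend_sum A LA SA B LB SB b b' :
  admissible G (sumset A B) b ->
  [disjoint LA & SA] -> [disjoint LA & A] -> [disjoint SA & A] ->
  [disjoint LB & SB] -> [disjoint LB & B] -> [disjoint SB & B] ->
  #|LA| + #|LB| <= b.+1 -> b' + (#|LA| + #|LB|) <= b + (#|SA| + #|SB|) ->
  (forall x y, x \in SA -> eH x y -> (y \in LA) || (y \in A)) ->
  (forall x y, x \in SB -> eT x y -> (y \in LB) || (y \in B)) ->
  admissible G (sumset (A :|: LA :|: SA) (B :|: LB :|: SB)) b'.
Proof.
move=> adm dLSA dLA dSA dLSB dLB dSB small surplus nbrA nbrB.
rewrite -!sumsetU; apply: (admissible_extend sum_rel_sym adm);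
  rewrite ?card_sumset ?disjoint_sumset //.
by move=> [x|x] [y|y] //=; rewrite !inE; [exact: nbrA | exact: nbrB].
Qed.

Lemma admissible_extend_inl A LA SA B b b' :
  admissible G (sumset A B) b ->
  [disjoint LA & SA] -> [disjoint LA & A] -> [disjoint SA & A] ->
  #|LA| <= b.+1 -> b' + #|LA| <= b + #|SA| ->
  (forall x y, x \in SA -> eH x y -> (y \in LA) || (y \in A)) ->
  admissible G (sumset (A :|: LA :|: SA) B) b'.
Proof.
move=> adm dLS dL dS small surplus nbr.
rewrite -[B]setU0 -[B :|: set0]setU0.
apply: admissible_extend_sum adm dLS dL dS _ _ _ _ _ nbr _;
  rewrite ?cards0 ?addn0 -?setI_eq0 ?setI0 ?set0I //.
by move=> x y; rewrite inE.
Qed.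

Lemma admissible_extend_inr A B LB SB b b' :
  admissible G (sumset A B) b ->
  [disjoint LB & SB] -> [disjoint LB & B] -> [disjoint SB & B] ->
  #|LB| <= b.+1 -> b' + #|LB| <= b + #|SB| ->
  (forall x y, x \in SB -> eT x y -> (y \in LB) || (y \in B)) ->
  admissible G (sumset A (B :|: LB :|: SB)) b'.
Proof.
move=> adm dLS dL dS small surplus nbr.
rewrite -[A]setU0 -[A :|: set0]setU0.
apply: admissible_extend_sum adm _ _ _ dLS dL dS _ _ _ nbr;
  rewrite ?cards0 ?add0n -?setI_eq0 ?setI0 ?set0I //.
by move=> x y; rewrite inE.
Qed.

End SumGraph.

Section Pendant.
Variables (T : finType) (e : rel T).
Hypothesis e_sym : symmetric e.
Local Notation P := (PT e).
Local Notation N := (Nbh e P).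

Definition pendants (X : {set T}) : {set T} := [set q in P | [exists x in X, e x q]].

Lemma pendant_nbr_unique q x y : q \in P -> e q x -> e q y -> x = y.
Proof.
rewrite inE => /andP [/cards1P [a nbrs] _] eqx eqy.
have /setP nbr := nbrs; have := nbr x; have := nbr y.
by rewrite !inE eqx eqy => /esym/eqP -> /esym/eqP ->.
Qed.

Lemma support_not_pendant x : x \in N -> x \notin P.
Proof.
rewrite inE => /exists_inP [q qP eqx]; have := qP.
rewrite inE => /andP [_ /existsP [y /andP [eqy deg_y]]].
rewrite -(pendant_nbr_unique qP eqx eqy) in deg_y.
by rewrite inE negb_and neq_ltn deg_y orbT.
Qed.

Lemma pendants_split (X : {set T}) x : x \in X ->
  pendants X = [set q in P | e x q] :|: pendants (X :\ x).
Proof.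
move=> xX; apply/setP => q; rewrite /pendants !inE -andb_orr; congr (_ && _).
apply/exists_inP/orP => [[z zX ezq]|[exq|/exists_inP [z]]].
- case: (eqVneq z x) => [<-|zx]; first by left.
  by right; apply/exists_inP; exists z; rewrite // !inE zx.
- by exists x.
- by rewrite !inE => /andP [_ zX] ezq; exists z.
Qed.

Lemma pendants_split_disjoint (X : {set T}) x :
  [disjoint [set q in P | e x q] & pendants (X :\ x)].
Proof.
rewrite disjoints_subset; apply/subsetP => q; rewrite in_set => /andP [qP exq].
rewrite in_setC /pendants in_set qP /=; apply/negP => /exists_inP [z].
rewrite !inE => /andP [zx _]; rewrite e_sym => ezq; rewrite e_sym in exq.
by move: zx; rewrite -(pendant_nbr_unique qP exq ezq) eqxx.
Qed.

Lemma pendants_N : pendants N = P.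
Proof.
apply/setP => q; rewrite /pendants inE; case qP: (q \in P) => //=.
have := qP; rewrite inE => /andP [_ /existsP [y /andP [eqy _]]].
apply/exists_inP; exists y; last by rewrite e_sym.
by rewrite inE; apply/exists_inP; exists q.
Qed.

End Pendant.

Section ForestPhase.
Variables (VH VT : finType) (eH : rel VH) (eT : rel VT).
Hypotheses (symH : symmetric eH) (symT : symmetric eT) (irrT : irreflexive eT).
Hypothesis acT : acyclic eT.
Local Notation G := (sum_rel eH eT).
Local Notation P := (PT eT).
Local Notation N := (Nbh eT P).

(* each support vertex x of N goes low, right before its pendant neighbours
   go high; this yields surplus |P| - |N| on the stars around N *)
Lemma pendant_stars_admissible (X : {set VT}) : X \subset N ->
  admissible G (sumset set0 (X :|: pendants eT X)) (#|pendants eT X| - #|X|)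
  /\ #|X| <= #|pendants eT X|.
Proof.
have [n] := ubnP #|X|; elim: n X => // n IH X ltXn sXN.
have [->|[x xX]] := set_0Vmem X.
  have -> : pendants eT set0 = set0.
    apply/setP => q; rewrite /pendants !inE.
    by case: exists_inP => [[z]|]; rewrite ?inE ?andbF.
  have -> : sumset set0 (set0 :|: set0) = set0 :> {set VH + VT}.
    by apply/setP => -[x|y]; rewrite !inE.
  by rewrite cards0; split; first exact: admissible0.
set X' := X :\ x; set px := [set q in P | eT x q].
have cardX : #|X| = #|X'|.+1 by rewrite (cardsD1 x X) xX.
have [adm' le'] : admissible G (sumset set0 (X' :|: pendants eT X')) (#|pendants eT X'| - #|X'|)
    /\ #|X'| <= #|pendants eT X'|.
  by apply: IH; [rewrite -ltnS -cardX | apply: subset_trans sXN; apply: subsetDl].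
have xN : x \in N := subsetP sXN x xX.
have xP : x \notin P := support_not_pendant xN.
have px_gt0 : 0 < #|px|.
  move: xN; rewrite inE => /exists_inP [q qP eqx].
  by apply/card_gt0P; exists q; rewrite inE qP symT.
have pendX := pendants_split eT xX; have dpx := pendants_split_disjoint symT X x.
have card_pend : #|pendants eT X| = #|px| + #|pendants eT X'| by rewrite pendX cardsU_disjoint.
have -> : X :|: pendants eT X = X' :|: pendants eT X' :|: [set x] :|: px.
  rewrite pendX -{1}(setD1K xX) -/X'; apply/setP => y; rewrite !in_setU.
  by case: (y \in X'); case: (y \in [set x]); case: (y \in px); case: (y \in pendants eT X').
split; last by lia.
apply: (admissible_extend_inr symH symT adm'); rewrite ?cards1.
- by rewrite disjoints1 inE negb_and xP.
- rewrite disjoints1 in_setU negb_or /X' !inE eqxx /=.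
  by apply: contra xP; rewrite /pendants inE => /andP [].
- rewrite disjoints_subset; apply/subsetP => q qpx.
  rewrite in_setC in_setU negb_or (disjointFr dpx qpx) andbT.
  apply: contraL qpx => /setD1P [_ /(subsetP sXN) /support_not_pendant qP].
  by rewrite inE negb_and qP.
- by [].
- by rewrite card_pend cardX; lia.
move=> q y; rewrite in_set => /andP [qP exq] eqy.
by rewrite in_set1 (pendant_nbr_unique qP eqy (_ : eT q x)) ?eqxx // symT.
Qed.

(* the rest of the forest is then peeled leaf by leaf: a vertex v with at most
   one neighbour w outside B goes high, right after w goes low *)
Lemma forest_admissible (A : {set VH}) (B : {set VT}) b :
  admissible G (sumset A B) b -> admissible G (sumset A setT) b.
Proof.
have [n] := ubnP #|~: B|; elim: n B => // n IH B ltBn adm.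
have [B_full|Bn0] := eqVneq (~: B) set0.
  by rewrite -(setCK B) B_full setC0 in adm.
have [v vB leaf] := forest_leaf symT irrT acT Bn0.
set Lv := [set w in ~: B | eT v w].
have Lv_le1 : #|Lv| <= 1.
  apply/card_le1_eqP => y z; rewrite !inE => /andP [yB evy] /andP [zB evz].
  by apply: leaf; rewrite ?inE.
apply: (IH (B :|: Lv :|: [set v])).
  rewrite -ltnS; apply: leq_trans ltBn; rewrite ltnS (cardsD1 v (~: B)) vB add1n ltnS.
  apply: subset_leq_card; apply/subsetP => y; rewrite !inE !negb_or => /andP [/andP [yB _] yv].
  by rewrite yv yB.
apply: (admissible_extend_inr symH symT adm).
- by rewrite disjoint_sym disjoints1 inE irrT andbF.
- by rewrite disjoints_subset; apply/subsetP => w; rewrite inE => /andP [].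
- by rewrite disjoints1 -in_setC.
- exact: leq_trans Lv_le1 _.
- by rewrite cards1 leq_add2l.
by move=> x y; rewrite inE => /eqP -> evy; rewrite !inE evy andbT; case: (y \in B).
Qed.

End ForestPhase.

Section DSequenceSets.
Variables (V : finType) (e : rel V).
Implicit Types (X : {set V}).

Lemma mem_core X y : (y \in core e X) = (y \notin iso e X) && (y \in X).
Proof. by rewrite /core in_setD. Qed.

Lemma iso_sub X x : x \in iso e X -> x \in X.
Proof. by rewrite inE => /andP []. Qed.

Lemma iso_nbr X x y : x \in iso e X -> y \in X -> ~~ e x y.
Proof. by rewrite inE => /andP [_ /forall_inP iso_x] /iso_x. Qed.

Lemma core_sub X x : x \in core e X -> x \in X.
Proof. by rewrite mem_core => /andP []. Qed.

Lemma nbr_core X x y : x \in X -> y \in X -> e x y -> x \in core e X.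
Proof.
move=> xX yX exy; rewrite mem_core xX andbT.
by apply/negP => xI; move: (iso_nbr xI yX); rewrite exy.
Qed.

Lemma core_delete X X' u : X' = [set y in core e X | (y != u) && ~~ e u y] ->
  ~: core e X' = ~: core e X :|: [set y in X | e u y] :|: (u |: iso e X').
Proof.
move=> X'E; apply/setP => y; rewrite !in_setU !in_setC in_set1 [y \in [set _ in X | _]]inE.
case yI: (y \in iso e X'); first by rewrite !orbT mem_core yI.
rewrite orbF [y \in core e X']mem_core yI /= X'E inE.
case yC: (y \in core e X) => //=; rewrite (core_sub yC) /=.
by case: (eqVneq y u); case: (e u y).
Qed.

Lemma core_full : (forall x, exists y, e x y) -> core e setT = setT.
Proof.
move=> no_iso; apply/setP => x; rewrite mem_core in_setT andbT.
have [y exy] := no_iso x; apply/negP => xI.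
by move: (iso_nbr xI (in_setT y)); rewrite exy.
Qed.

End DSequenceSets.

Section DSequenceNumbers.
Variables (V : finType) (e : rel V) (s : nat) (W : nat -> {set V}) (u : nat -> V).
Local Notation zv := (zval e s W u).
Local Notation Zm := (Zmin e s W u).

Lemma zval1 : zv 1 = 0%R.
Proof. by rewrite /zval big_geq. Qed.

Lemma zvalS i : 1 <= i ->
  zv i.+1 = (zv i + ((mnum e (W i.+1)).+1)%:Z - (dval e s W u i.+1)%:Z)%R.
Proof. by move=> i1; rewrite /zval big_nat_recr /= ?addrA //; lia. Qed.

(* since z_1 = 0, Z <= 0 makes Z a lower bound of every z_i, 1 <= i <= s *)
Lemma Zmin_le_zval i : (Zm <= 0)%R -> 1 <= i <= s -> (Zm <= zv i)%R.
Proof.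
move=> Z0 /andP [i1 iS]; have [->|i_neq1] := eqVneq i 1; first by rewrite zval1.
by rewrite /Zmin; apply: ge_bigmin_seq; rewrite // mem_index_iota; lia.
Qed.

End DSequenceNumbers.

Section DegeneracyPhase.
Variables (VH VT : finType) (eH : rel VH) (eT : rel VT).
Hypotheses (symH : symmetric eH) (irrH : irreflexive eH) (symT : symmetric eT).
Variables (s : nat) (W : nat -> {set VH}) (u : nat -> VH).
Hypothesis no_isoH : forall x, exists y, eH x y.
Hypothesis dseq : is_dseq eH s W u.
Local Notation G := (sum_rel eH eT).
Local Notation dv := (dval eH s W u).
Local Notation zv := (zval eH s W u).
Local Notation Zm := (Zmin eH s W u).

(* step i of the d-sequence: the d_i neighbours of u_i go low, then u_i and
   the m_{i+1} vertices isolated by deleting N[u_i] go high *)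
Lemma dseq_step i B b : 1 <= i < s ->
  admissible G (sumset (~: core eH (W i)) B) b -> dv i <= b.+1 ->
  admissible G (sumset (~: core eH (W i.+1)) B) (b + (mnum eH (W i.+1)).+1 - dv i).
Proof.
move=> i_range adm dv_le; have [_ _ dseq_i _] := dseq.
have [_ ui Wi1] := dseq_i i i_range.
set Ni := [set y in W i | eH (u i) y]; set Si := u i |: iso eH (W i.+1).
have dvE : dv i = #|Ni| by rewrite /dval; case/andP: i_range => _ ->.
have uiW : u i \in W i := core_sub ui.
have mem_W1 y : (y \in W i.+1) = (y \in core eH (W i)) && ((y != u i) && ~~ eH (u i) y).
  by rewrite Wi1 inE.
have uiW1 : u i \notin W i.+1 by rewrite mem_W1 eqxx andbF.
have card_Si : #|Si| = (mnum eH (W i.+1)).+1.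
  by rewrite cardsU1 /mnum (contraNN (@iso_sub _ _ _ _) uiW1).
rewrite (core_delete Wi1) -/Ni -/Si.
apply: (admissible_extend_inl symH symT adm).
- rewrite disjoints_subset; apply/subsetP => y; rewrite inE => /andP [_ euy].
  rewrite in_setC in_setU1 negb_or; apply/andP; split.
    by apply/negP => /eqP yu; move: euy; rewrite yu irrH.
  by apply/negP => /iso_sub; rewrite mem_W1 euy !andbF.
- rewrite disjoints_subset; apply/subsetP => y; rewrite inE => /andP [yW euy].
  by rewrite !in_setC negbK (nbr_core yW uiW) // symH.
- rewrite disjoints_subset; apply/subsetP => y; rewrite !in_setC negbK in_setU1.
  case/orP => [/eqP -> //|/iso_sub]; by rewrite mem_W1 => /andP [].
- by rewrite -dvE.
- by rewrite card_Si -dvE; lia.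
move=> x z; rewrite in_setU1 => /orP [/eqP ->|xI] exz.
  case zW: (z \in W i); first by rewrite inE zW exz.
  by rewrite in_setC; apply/orP; right; apply/negP => /core_sub; rewrite zW.
case zC: (z \in core eH (W i)); last by rewrite in_setC zC orbT.
case: (eqVneq z (u i)) => [zu|zu].
  by move: (iso_sub xI); rewrite mem_W1 -zu symH exz !andbF.
case euz: (eH (u i) z); first by rewrite inE (core_sub zC) euz.
have zW1 : z \in W i.+1 by rewrite mem_W1 zC zu euz.
by move: (iso_nbr xI zW1); rewrite exz.
Qed.

(* surplus bookkeeping: starting from surplus b0 >= d_1 - Z, the surplus after
   the steps before i is at least b0 - d_1 + d_i + z_i, which is >= d_i *)
Lemma dseq_surplus B b0 : admissible G (sumset set0 B) b0 ->
  (Zm <= 0)%R -> ((dv 1)%:Z - Zm <= b0%:Z)%R ->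
  forall i, 1 <= i <= s -> exists2 b, admissible G (sumset (~: core eH (W i)) B) b &
    (b0%:Z - (dv 1)%:Z + (dv i)%:Z + zv i <= b%:Z)%R.
Proof.
move=> adm0 Z0 b0_ge; elim=> [//|i IH] /andP [i_ge0 i_lt].
have [->|i_gt0] := eqVneq i 0.
  exists b0; last by rewrite zval1; lia.
  by have [_ W1 _ _] := dseq; rewrite W1 core_full // setCT.
have i_range : 1 <= i <= s by apply/andP; lia.
have [b adm b_ge] := IH i_range; have z_ge := Zmin_le_zval Z0 i_range.
exists (b + (mnum eH (W i.+1)).+1 - dv i).
  by apply: dseq_step; rewrite ?adm //; [apply/andP | ]; lia.
by rewrite zvalS; lia.
Qed.

(* the final graph m_s K_1 + K_r: all but one vertex of K_r go low (d_s = r - 1),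
   the last one goes high; for m_s K_1 nothing remains to be done *)
Lemma dseq_final B b : admissible G (sumset (~: core eH (W s)) B) b -> dv s <= b.+1 ->
  exists b', admissible G (sumset setT B) b'.
Proof.
move=> adm dv_le; have [_ _ _ stop_s] := dseq.
have dvE : dv s = dstop eH (W s) by rewrite /dval ltnn.
have [complete|not_complete] := boolP (stop_complete eH (W s)); last first.
  have /andP [_ /forall_inP edgeless_s] : stop_empty eH (W s).
    by move: stop_s; rewrite /stopform (negbTE not_complete) orbF.
  suff full : ~: core eH (W s) = setT by exists b; rewrite -full.
  apply/setP => y; rewrite in_setC in_setT mem_core negb_and negbK.
  case yW: (y \in W s); last by rewrite orbT.
  by rewrite orbF inE yW; apply/forall_inP => z; apply: (forall_inP (edgeless_s y yW)).
set K := core eH (W s).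
have /set0Pn [c cK] : K != set0 by case/andP: complete.
have dsE : dstop eH (W s) = #|K :\ c| by rewrite /dstop complete (cardsD1 c K) cK.
exists 0.
have -> : [set: VH] = ~: K :|: (K :\ c) :|: [set c].
  apply/setP => y; rewrite !in_setU in_setC in_setD1 in_set1 in_setT.
  by case: (eqVneq y c) => [->|]; rewrite ?cK //=; case: (y \in K).
apply: (admissible_extend_inl symH symT adm).
- by rewrite disjoint_sym disjoints1 in_setD1 eqxx.
- by rewrite disjoints_subset; apply/subsetP => y; rewrite in_setD1 !in_setC negbK => /andP [].
- by rewrite disjoints1 in_setC negbK.
- by rewrite -dsE -dvE.
- by rewrite cards1 -dsE -dvE; lia.
move=> x z; rewrite in_set1 => /eqP -> ecz.
case zK: (z \in K); last by rewrite in_setC zK orbT.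
rewrite in_setD1 zK andbT; apply/orP; left; apply/eqP => zc.
by move: ecz; rewrite zc irrH.
Qed.

End DegeneracyPhase.

Theorem mainTheorem8
  (VH : finType) (eH : rel VH) (VT : finType) (eT : rel VT)
  (s : nat) (W : nat -> {set VH}) (u : nat -> VH) :
  symmetric eH -> irreflexive eH ->
  (forall v, 1 <= deg eH v)%N ->
  (exists v, deg eH v <= #|VH| - 2)%N ->
  is_dseq eH s W u ->
  (Zmin eH s W u <= 0)%R ->
  symmetric eT -> irreflexive eT ->
  acyclic eT ->
  (forall v, 1 <= deg eT v)%N ->
  (3 <= #|VT|)%N ->
  (#|PT eT|%:Z - #|Nbh eT (PT eT)|%:Z >=
     (dval eH s W u 1)%:Z - Zmin eH s W u)%R ->
  str (sum_rel eH eT) = (#|VH| + #|VT|).+1.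
Proof.
move=> symH irrH degH _ dseq Z0 symT irrT acT degT VT_ge3 surplus.
have no_iso (V : finType) (e : rel V) x : 1 <= deg e x -> exists y, e x y.
  by case/card_gt0P => y; rewrite inE; exists y.
have [stars _] := pendant_stars_admissible symH symT (subxx (Nbh eT (PT eT))).
rewrite pendants_N // in stars.
have forest := forest_admissible symH symT irrT acT stars.
have b0_ge : ((dval eH s W u 1)%:Z - Zmin eH s W u
              <= (#|PT eT| - #|Nbh eT (PT eT)|)%:Z)%R by lia.
have [s_ge2 _ _ _] := dseq.
have s_range : 1 <= s <= s by apply/andP; lia.
have no_isoH x := no_iso _ _ x (degH x).
have [b adm b_ge] := dseq_surplus symH irrH symT no_isoH dseq forest Z0 b0_ge s_range.
have dv_le : dval eH s W u s <= b.+1.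
  by have := Zmin_le_zval Z0 s_range; lia.
have [b' adm_all] := dseq_final symH irrH symT dseq adm dv_le.
rewrite sumsetTT in adm_all.
rewrite -card_sum; apply: (str_admissible (sum_rel_sym symH symT) _ _ adm_all).
  by rewrite card_sum; lia.
by move=> [x|y]; [have [y h] := no_isoH x; exists (inl y)
                 | have [z h] := no_iso _ _ y (degT y); exists (inr z)].
Qed.
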